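(* Let $A=(A,\mu,\eta,\Delta,\varepsilon,S)$ be an involutory Hopf algebra in a symmetric monoidal category $\mathcal{C}$ satisfying (A1): there are an invertible object $I$, a universal left integral $\Lambda\colon I\to A$ and a universal right cointegral $\lambda\colon A\to I$ with $\lambda\Lambda=\mathrm{id}_I$. Then the map $$\Psi\colon \mathrm{Hom}_{\mathcal{C}}(A\otimes A,I)\to\mathrm{Hom}_{\mathcal{C}}(A\otimes I,I\otimes A),\qquad \Psi(e)=(e\otimes\mathrm{id}_A)(\mathrm{id}_A\otimes\Delta\Lambda),$$ is injective.
   Context: $\mathcal{C}$ symmetric monoidal with unit $\mathbb{1}$, symmetry $\tau$, constraints suppressed. An object $I$ is invertible if $I\otimes J\cong\mathbb{1}$ for some $J$. Involutory Hopf algebra: bialgebra with invertible antipode $S$, $S^2=\mathrm{id}_A$. A left integral is $\Lambda\colon I\to A$ with $\mu(\mathrm{id}_A\otimes\Lambda)=\varepsilon\otimes\Lambda$; a right cointegral is $\lambda\colon A\to I$ with $(\lambda\otimes\mathrm{id}_A)\Delta=\lambda\otimes\eta$. $\Lambda$ is universal if every left integral $X\to A$ factors uniquely through $\Lambda$ via a morphism $X\to I$; $\lambda$ is universal if every right cointegral $A\to X$ factors uniquely as $g'\lambda$ with $g'\colon I\to X$. *)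

From Stdlib Require Import Utf8.

Record SymMonCat := {
  ob :> Type;
  hom : ob -> ob -> Type;
  idm : forall a, hom a a;
  comp : forall a b c, hom b c -> hom a b -> hom a c;
  comp_id_l : forall a b (f : hom a b), comp a b b (idm b) f = f;
  comp_id_r : forall a b (f : hom a b), comp a a b f (idm a) = f;
  comp_assoc : forall a b c d (f : hom a b) (g : hom b c) (h : hom c d),
      comp a c d h (comp a b c g f) = comp a b d (comp b c d h g) f;
  tens : ob -> ob -> ob;
  tensm : forall a b c d, hom a b -> hom c d -> hom (tens a c) (tens b d);
  tensm_id : forall a b, tensm a a b b (idm a) (idm b) = idm (tens a b);
  tensm_comp : forall a b c d e f (g : hom b c) (g' : hom a b)
      (h : hom e f) (h' : hom d e),
      tensm a c d f (comp a b c g g') (comp d e f h h')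
      = comp (tens a d) (tens b e) (tens c f) (tensm b c e f g h) (tensm a b d e g' h');
  unit : ob;
  assoc : forall a b c, hom (tens a (tens b c)) (tens (tens a b) c);
  assoc_inv : forall a b c, hom (tens (tens a b) c) (tens a (tens b c));
  assoc_inv_l : forall a b c,
      comp _ _ _ (assoc_inv a b c) (assoc a b c) = idm (tens a (tens b c));
  assoc_inv_r : forall a b c,
      comp _ _ _ (assoc a b c) (assoc_inv a b c) = idm (tens (tens a b) c);
  assoc_nat : forall a b c d e f (x : hom a b) (y : hom c d) (z : hom e f),
      comp _ _ _ (assoc b d f) (tensm _ _ _ _ x (tensm _ _ _ _ y z))
      = comp _ _ _ (tensm _ _ _ _ (tensm _ _ _ _ x y) z) (assoc a c e);
  lunit : forall a, hom (tens unit a) a;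
  lunit_inv : forall a, hom a (tens unit a);
  lunit_inv_l : forall a, comp _ _ _ (lunit_inv a) (lunit a) = idm (tens unit a);
  lunit_inv_r : forall a, comp _ _ _ (lunit a) (lunit_inv a) = idm a;
  lunit_nat : forall a b (x : hom a b),
      comp _ _ _ (lunit b) (tensm _ _ _ _ (idm unit) x) = comp _ _ _ x (lunit a);
  runit : forall a, hom (tens a unit) a;
  runit_inv : forall a, hom a (tens a unit);
  runit_inv_l : forall a, comp _ _ _ (runit_inv a) (runit a) = idm (tens a unit);
  runit_inv_r : forall a, comp _ _ _ (runit a) (runit_inv a) = idm a;
  runit_nat : forall a b (x : hom a b),
      comp _ _ _ (runit b) (tensm _ _ _ _ x (idm unit)) = comp _ _ _ x (runit a);
  sym : forall a b, hom (tens a b) (tens b a);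
  sym_invol : forall a b, comp _ _ _ (sym b a) (sym a b) = idm (tens a b);
  sym_nat : forall a b c d (x : hom a b) (y : hom c d),
      comp _ _ _ (sym b d) (tensm _ _ _ _ x y) = comp _ _ _ (tensm _ _ _ _ y x) (sym a c);
  pentagon : forall a b c d,
      comp _ _ _ (assoc (tens a b) c d) (assoc a b (tens c d))
      = comp _ _ _ (tensm _ _ _ _ (assoc a b c) (idm d))
          (comp _ _ _ (assoc a (tens b c) d) (tensm _ _ _ _ (idm a) (assoc b c d)));
  triangle : forall a b,
      comp _ _ _ (tensm _ _ _ _ (runit a) (idm b)) (assoc a unit b)
      = tensm _ _ _ _ (idm a) (lunit b);
  hexagon : forall a b c,
      sym a (tens b c)
      = comp _ _ _ (assoc b c a)
         (comp _ _ _ (tensm _ _ _ _ (idm b) (sym a c))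
          (comp _ _ _ (assoc_inv b a c)
           (comp _ _ _ (tensm _ _ _ _ (sym a b) (idm c)) (assoc a b c))))
}.

Arguments hom {s} a b.
Arguments idm {s} a.
Arguments comp {s a b c} g f.
Arguments tens {s} a b.
Arguments tensm {s a b c d} f g.
Arguments unit {s}.
Arguments assoc {s} a b c.
Arguments assoc_inv {s} a b c.
Arguments lunit {s} a.
Arguments lunit_inv {s} a.
Arguments runit {s} a.
Arguments runit_inv {s} a.
Arguments sym {s} a b.

Declare Scope cat_scope.
Delimit Scope cat_scope with cat.
Notation "g ∘ f" := (comp g f) (at level 40, left associativity) : cat_scope.
Notation "f ⊗ g" := (tensm f g) (at level 35, no associativity) : cat_scope.
Notation "a ⊠ b" := (tens a b) (at level 34, right associativity) : cat_scope.
Open Scope cat_scope.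

Section Hopf.
Context {C : SymMonCat}.

Definition mid (a b c d : C) : hom ((a ⊠ b) ⊠ (c ⊠ d)) ((a ⊠ c) ⊠ (b ⊠ d)) :=
  assoc a c (b ⊠ d) ∘ (idm a ⊗ assoc_inv c b d)
  ∘ (idm a ⊗ (sym b c ⊗ idm d)) ∘ (idm a ⊗ assoc b c d) ∘ assoc_inv a b (c ⊠ d).

Definition invertible_ob (I : C) : Prop :=
  exists (J : C) (f : hom (I ⊠ J) unit) (g : hom unit (I ⊠ J)),
    f ∘ g = idm unit /\ g ∘ f = idm (I ⊠ J).

Record IsHopfAlgebra (A : C) (mu : hom (A ⊠ A) A) (eta : hom unit A)
    (Delta : hom A (A ⊠ A)) (eps : hom A unit) (S : hom A A) : Prop := {
  hopf_mul_assoc : mu ∘ (mu ⊗ idm A) ∘ assoc A A A = mu ∘ (idm A ⊗ mu);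
  hopf_unit_l : mu ∘ (eta ⊗ idm A) = lunit A;
  hopf_unit_r : mu ∘ (idm A ⊗ eta) = runit A;
  hopf_coassoc : assoc A A A ∘ (idm A ⊗ Delta) ∘ Delta = (Delta ⊗ idm A) ∘ Delta;
  hopf_counit_l : lunit A ∘ (eps ⊗ idm A) ∘ Delta = idm A;
  hopf_counit_r : runit A ∘ (idm A ⊗ eps) ∘ Delta = idm A;
  hopf_bialg : Delta ∘ mu = (mu ⊗ mu) ∘ mid A A A A ∘ (Delta ⊗ Delta);
  hopf_eps_mul : eps ∘ mu = lunit unit ∘ (eps ⊗ eps);
  hopf_Delta_eta : Delta ∘ eta = (eta ⊗ eta) ∘ lunit_inv unit;
  hopf_eps_eta : eps ∘ eta = idm unit;
  hopf_antipode_l : mu ∘ (S ⊗ idm A) ∘ Delta = eta ∘ eps;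
  hopf_antipode_r : mu ∘ (idm A ⊗ S) ∘ Delta = eta ∘ eps
}.

Definition left_integral {A : C} (mu : hom (A ⊠ A) A) (eps : hom A unit)
    {X : C} (f : hom X A) : Prop :=
  mu ∘ (idm A ⊗ f) = lunit A ∘ (eps ⊗ f).

Definition right_cointegral {A : C} (Delta : hom A (A ⊠ A)) (eta : hom unit A)
    {X : C} (f : hom A X) : Prop :=
  (f ⊗ idm A) ∘ Delta = (f ⊗ eta) ∘ runit_inv A.

Definition universal_left_integral {A : C} (mu : hom (A ⊠ A) A)
    (eps : hom A unit) {I : C} (Lam : hom I A) : Prop :=
  left_integral mu eps Lam /\
  forall (X : C) (f : hom X A), left_integral mu eps f ->
    exists! g : hom X I, f = Lam ∘ g.

Definition universal_right_cointegral {A : C} (Delta : hom A (A ⊠ A))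
    (eta : hom unit A) {I : C} (lam : hom A I) : Prop :=
  right_cointegral Delta eta lam /\
  forall (X : C) (f : hom A X), right_cointegral Delta eta f ->
    exists! g : hom I X, f = g ∘ lam.

Definition Psi {A I : C} (Delta : hom A (A ⊠ A)) (Lam : hom I A)
    (e : hom (A ⊠ A) I) : hom (A ⊠ I) (I ⊠ A) :=
  (e ⊗ idm A) ∘ assoc A A A ∘ (idm A ⊗ (Delta ∘ Lam)).

End Hopf.

From Stdlib Require Import Setoid.

(* The map a ↦ (id ⊗ λ)Δ(a) is a right cointegral A → A ⊗ I, so it factors
   through λ as γλ with γ = (id ⊗ λ)ΔΛ (using λΛ = id); since λ is moreover
   epi, the antipode axiom yields the snake identity
   (μ ⊗ id)(id ⊗ (S ⊗ id)γ)γ = η ⊗ id_I.  The left integral property gives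
   Λ₁ ⊗ aΛ₂ = S(a)Λ₁ ⊗ Λ₂.  Pairing the A-output of Ψ(e) against a fresh
   input through φ(a ⊗ b) = λ(S(a)b) and feeding in (S ⊗ id)γ, these two
   identities straighten the resulting diagram to e ⊗ id_I.  Finally, I is
   invertible, so − ⊗ id_I is faithful and Ψ is injective. *)

Arguments comp_id_l {s a b} f.
Arguments comp_id_r {s a b} f.
Arguments comp_assoc {s a b c d} f g h.
Arguments tensm_id {s} a b.
Arguments tensm_comp {s a b c d e f} g g' h h'.
Arguments assoc_inv_l {s} a b c.
Arguments assoc_inv_r {s} a b c.
Arguments assoc_nat {s a b c d e f} x y z.
Arguments lunit_inv_l {s} a.
Arguments lunit_inv_r {s} a.
Arguments lunit_nat {s a b} x.
Arguments runit_inv_l {s} a.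
Arguments runit_inv_r {s} a.
Arguments runit_nat {s a b} x.
Arguments sym_invol {s} a b.
Arguments sym_nat {s a b c d} x y.
Arguments pentagon {s} a b c d.
Arguments triangle {s} a b.
Arguments hexagon {s} a b c.

Arguments hopf_mul_assoc {C A mu eta Delta eps S} _.
Arguments hopf_unit_l {C A mu eta Delta eps S} _.
Arguments hopf_unit_r {C A mu eta Delta eps S} _.
Arguments hopf_coassoc {C A mu eta Delta eps S} _.
Arguments hopf_counit_l {C A mu eta Delta eps S} _.
Arguments hopf_counit_r {C A mu eta Delta eps S} _.
Arguments hopf_bialg {C A mu eta Delta eps S} _.
Arguments hopf_antipode_l {C A mu eta Delta eps S} _.

Section MonoidalCalculus.
Context {C : SymMonCat}.

Lemma compA {a b c d : C} (f : hom a b) (g : hom b c) (h : hom c d) :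
  h ∘ (g ∘ f) = h ∘ g ∘ f.
Proof. apply comp_assoc. Qed.

(* Composites are kept left-associated; these lemmas let an equation between
   the last few factors of such a chain be used to rewrite inside it. *)
Lemma comp_chain2 {b c d : C} {x : hom c d} {y : hom b c} {z : hom b d}
  (E : x ∘ y = z) : forall e (w : hom d e), w ∘ x ∘ y = w ∘ z.
Proof. intros. rewrite <- E, compA. reflexivity. Qed.

Lemma comp_chain3 {b c d e : C} {x : hom d e} {y : hom c d} {u : hom b c}
  {z : hom b e} (E : x ∘ y ∘ u = z) : forall f (w : hom e f), w ∘ x ∘ y ∘ u = w ∘ z.
Proof. intros. rewrite <- E, !compA. reflexivity. Qed.

Lemma comp_chain4 {b c d e f : C} {x : hom e f} {y : hom d e} {u : hom c d}
  {v : hom b c} {z : hom b f} (E : x ∘ y ∘ u ∘ v = z) :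
  forall g (w : hom f g), w ∘ x ∘ y ∘ u ∘ v = w ∘ z.
Proof. intros. rewrite <- E, !compA. reflexivity. Qed.

Lemma comp_chain5 {b c d e f g : C} {x : hom f g} {y : hom e f} {u : hom d e}
  {v : hom c d} {t : hom b c} {z : hom b g} (E : x ∘ y ∘ u ∘ v ∘ t = z) :
  forall h (w : hom g h), w ∘ x ∘ y ∘ u ∘ v ∘ t = w ∘ z.
Proof. intros. rewrite <- E, !compA. reflexivity. Qed.

Lemma comp_tensm {a b c d e f : C} (g : hom b c) (g' : hom a b) (h : hom e f)
  (h' : hom d e) : (g ⊗ h) ∘ (g' ⊗ h') = (g ∘ g') ⊗ (h ∘ h').
Proof. symmetry; apply tensm_comp. Qed.

Lemma tensm_factor_l {a b c d : C} (f : hom a b) (g : hom c d) :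
  f ⊗ g = (f ⊗ idm d) ∘ (idm a ⊗ g).
Proof. rewrite comp_tensm, comp_id_l, comp_id_r. reflexivity. Qed.

Lemma tensm_factor_r {a b c d : C} (f : hom a b) (g : hom c d) :
  f ⊗ g = (idm b ⊗ g) ∘ (f ⊗ idm c).
Proof. rewrite comp_tensm, comp_id_l, comp_id_r. reflexivity. Qed.

Lemma tensm_interchange {a b c d : C} (f : hom a b) (g : hom c d) :
  (f ⊗ idm d) ∘ (idm a ⊗ g) = (idm b ⊗ g) ∘ (f ⊗ idm c).
Proof. rewrite <- tensm_factor_l, <- tensm_factor_r. reflexivity. Qed.

Lemma tensm_comp_l {a b c d : C} (f : hom b c) (g : hom a b) :
  (f ∘ g) ⊗ idm d = (f ⊗ idm d) ∘ (g ⊗ idm d).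
Proof. rewrite comp_tensm, comp_id_l. reflexivity. Qed.

Lemma tensm_comp_r {a b c d : C} (f : hom b c) (g : hom a b) :
  idm d ⊗ (f ∘ g) = (idm d ⊗ f) ∘ (idm d ⊗ g).
Proof. rewrite comp_tensm, comp_id_l. reflexivity. Qed.

Lemma absorb_tensm_r {a a' b c d : C} (f : hom c d) (g : hom b c) (x : hom a a') :
  (idm a' ⊗ f) ∘ (x ⊗ g) = x ⊗ (f ∘ g).
Proof. rewrite comp_tensm, comp_id_l. reflexivity. Qed.

Lemma absorb_tensm_l {a a' b c d : C} (f : hom c d) (g : hom b c) (x : hom a a') :
  (f ⊗ idm a') ∘ (g ⊗ x) = (f ∘ g) ⊗ x.
Proof. rewrite comp_tensm, comp_id_l. reflexivity. Qed.

Lemma split_tensm_r {a a' b c d : C} (f : hom c d) (g : hom b c) (x : hom a a') :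
  x ⊗ (f ∘ g) = (x ⊗ f) ∘ (idm a ⊗ g).
Proof. rewrite comp_tensm, comp_id_r. reflexivity. Qed.

Lemma split_tensm_l {a a' b c d : C} (f : hom c d) (g : hom b c) (x : hom a a') :
  (f ∘ g) ⊗ x = (f ⊗ x) ∘ (g ⊗ idm a).
Proof. rewrite comp_tensm, comp_id_r. reflexivity. Qed.

Lemma split_epi_cancel {a b c : C} (f g : hom b c) (h : hom a b) (h' : hom b a) :
  h ∘ h' = idm b -> f ∘ h = g ∘ h -> f = g.
Proof.
  intros Hh E. rewrite <- (comp_id_r f), <- (comp_id_r g), <- Hh, !compA, E.
  reflexivity.
Qed.

Lemma split_mono_cancel {a b c : C} (f g : hom a b) (h : hom b c) (h' : hom c b) :
  h' ∘ h = idm b -> h ∘ f = h ∘ g -> f = g.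
Proof.
  intros Hh E. rewrite <- (comp_id_l f), <- (comp_id_l g), <- Hh, <- !compA, E.
  reflexivity.
Qed.

Lemma assoc_inv_nat {a b c d e f : C} (x : hom a b) (y : hom c d) (z : hom e f) :
  assoc_inv b d f ∘ ((x ⊗ y) ⊗ z) = (x ⊗ (y ⊗ z)) ∘ assoc_inv a c e.
Proof.
  rewrite <- (comp_id_r (assoc_inv b d f ∘ _)), <- (assoc_inv_r a c e), !compA.
  rewrite <- (compA _ _ (assoc_inv b d f)), <- assoc_nat, !compA, assoc_inv_l, comp_id_l.
  reflexivity.
Qed.

Lemma lunit_inv_nat {a b : C} (x : hom a b) :
  lunit_inv b ∘ x = (idm unit ⊗ x) ∘ lunit_inv a.
Proof.
  rewrite <- (comp_id_l (_ ∘ lunit_inv a)), <- (lunit_inv_l b), <- !compA.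
  rewrite (compA _ _ (lunit b)), lunit_nat, <- compA, lunit_inv_r, comp_id_r.
  reflexivity.
Qed.

Lemma runit_inv_nat {a b : C} (x : hom a b) :
  runit_inv b ∘ x = (x ⊗ idm unit) ∘ runit_inv a.
Proof.
  rewrite <- (comp_id_l (_ ∘ runit_inv a)), <- (runit_inv_l b), <- !compA.
  rewrite (compA _ _ (runit b)), runit_nat, <- compA, runit_inv_r, comp_id_r.
  reflexivity.
Qed.

Lemma tensm_unit_r_inj {a b : C} (f g : hom a b) :
  f ⊗ idm unit = g ⊗ idm unit -> f = g.
Proof.
  intros E.
  rewrite <- (comp_id_r f), <- (comp_id_r g), <- (runit_inv_r a), !compA,
    <- !runit_nat, E. reflexivity.
Qed.

Lemma tensm_unit_l_inj {a b : C} (f g : hom a b) :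
  idm unit ⊗ f = idm unit ⊗ g -> f = g.
Proof.
  intros E.
  rewrite <- (comp_id_r f), <- (comp_id_r g), <- (lunit_inv_r a), !compA,
    <- !lunit_nat, E. reflexivity.
Qed.

Lemma tensm_invertible_inj {X : C} (I : C) (e1 e2 : hom X I) :
  invertible_ob I -> e1 ⊗ idm I = e2 ⊗ idm I -> e1 = e2.
Proof.
  intros [J [f [g [Hfg Hgf]]]] E.
  assert (E2 : e1 ⊗ idm (I ⊠ J) = e2 ⊗ idm (I ⊠ J)).
  { apply (split_mono_cancel _ _ (assoc I I J) (assoc_inv I I J)); [apply assoc_inv_l|].
    rewrite <- !tensm_id, !assoc_nat, E. reflexivity. }
  apply tensm_unit_r_inj.
  assert (K : forall e : hom X I,
      e ⊗ (f ∘ g) = (idm I ⊗ f) ∘ (e ⊗ idm (I ⊠ J)) ∘ (idm X ⊗ g)).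
  { intros. rewrite !comp_tensm, comp_id_l, !comp_id_r. reflexivity. }
  rewrite <- Hfg, !K, E2. reflexivity.
Qed.

End MonoidalCalculus.

Ltac rw_chain1 H :=
  first [ rewrite H | rewrite (comp_chain2 H) | rewrite (comp_chain3 H)
        | rewrite (comp_chain4 H) | rewrite (comp_chain5 H) ].
Tactic Notation "rw_chain" open_constr(H) := rw_chain1 H; rewrite ?compA.

Section Coherence.
Context {C : SymMonCat}.

Lemma kelly_r (a b : C) :
  runit (a ⊠ b) ∘ assoc a b unit = idm a ⊗ runit b.
Proof.
  apply tensm_unit_r_inj.
  assert (P := pentagon a b unit unit). rewrite !compA in P.
  apply (split_epi_cancel _ _ (assoc a (b ⊠ unit) unit ∘ (idm a ⊗ assoc b unit unit))
           ((idm a ⊗ assoc_inv b unit unit) ∘ assoc_inv a (b ⊠ unit) unit)).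
  { rewrite !compA. rw_chain (comp_tensm _ _ _ _).
    rewrite assoc_inv_r, comp_id_l, tensm_id, comp_id_r, assoc_inv_r. reflexivity. }
  rewrite !compA, tensm_comp_l.
  rw_chain (eq_sym P).
  rw_chain (triangle _ _).
  rewrite <- (tensm_id a b), <- assoc_nat, ?compA.
  rewrite <- (triangle b unit), tensm_comp_r, !compA.
  rw_chain (assoc_nat _ _ _). reflexivity.
Qed.

Lemma kelly_l (a b : C) :
  lunit (a ⊠ b) = (lunit a ⊗ idm b) ∘ assoc unit a b.
Proof.
  apply tensm_unit_l_inj.
  assert (P := pentagon unit unit a b). rewrite !compA in P.
  apply (split_mono_cancel _ _ (assoc unit a b) (assoc_inv unit a b)); [apply assoc_inv_l|].
  rewrite <- (triangle unit (a ⊠ b)), <- (tensm_id a b).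
  rewrite !compA, assoc_nat, tensm_comp_r, !compA.
  rw_chain (assoc_nat _ _ _).
  rw_chain P. rw_chain (comp_tensm _ _ _ _). rewrite triangle, comp_id_l. reflexivity.
Qed.

Lemma triangle_inv (x y : C) :
  (idm x ⊗ lunit y) ∘ assoc_inv x unit y = runit x ⊗ idm y.
Proof. rewrite <- triangle, <- compA, assoc_inv_r, comp_id_r. reflexivity. Qed.

Lemma runit_inv_tens (a b : C) :
  assoc a b unit ∘ (idm a ⊗ runit_inv b) = runit_inv (a ⊠ b).
Proof.
  apply (split_mono_cancel _ _ (runit (a ⊠ b)) (runit_inv (a ⊠ b))); [apply runit_inv_l|].
  rewrite compA, kelly_r, comp_tensm, comp_id_l, !runit_inv_r, tensm_id. reflexivity.
Qed.

Lemma hexagon_inv (x p q : C) :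
  assoc_inv p x q ∘ (sym x p ⊗ idm q) ∘ assoc x p q ∘ sym (p ⊠ q) x
  = (idm p ⊗ sym q x) ∘ assoc_inv p q x.
Proof.
  assert (L : assoc_inv p x q ∘ (sym x p ⊗ idm q) ∘ assoc x p q
           = (idm p ⊗ sym q x) ∘ assoc_inv p q x ∘ sym x (p ⊠ q)).
  { rewrite hexagon, !compA. rw_chain (assoc_inv_l _ _ _). rw_chain (comp_id_r _).
    rw_chain (comp_tensm _ _ _ _). rewrite sym_invol, comp_id_l, tensm_id, comp_id_l.
    reflexivity. }
  rewrite L. rw_chain (sym_invol _ _). rewrite comp_id_r. reflexivity.
Qed.

Lemma pentagon_inv (a b c d : C) :
  assoc_inv (a ⊠ b) c d ∘ (assoc a b c ⊗ idm d)
  = assoc a b (c ⊠ d) ∘ (idm a ⊗ assoc_inv b c d) ∘ assoc_inv a (b ⊠ c) d.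
Proof.
  assert (P := pentagon a b c d). rewrite !compA in P.
  apply (split_mono_cancel _ _ (assoc (a ⊠ b) c d) (assoc_inv (a ⊠ b) c d));
    [apply assoc_inv_l|].
  rewrite !compA, assoc_inv_r, comp_id_l, P.
  rw_chain (comp_tensm _ _ _ _). rewrite comp_id_l, assoc_inv_r, tensm_id.
  rw_chain (comp_id_r _). rw_chain (assoc_inv_r _ _ _). rewrite comp_id_r. reflexivity.
Qed.

Lemma assoc_conj_whisker (a b c r p s : C) (T : hom (c ⊠ r) (p ⊠ s)) :
  (assoc a b p ⊗ idm s) ∘ assoc a (b ⊠ p) s
  ∘ (idm a ⊗ (assoc b p s ∘ (idm b ⊗ T) ∘ assoc_inv b c r))
  ∘ assoc_inv a (b ⊠ c) r ∘ (assoc_inv a b c ⊗ idm r)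
  = assoc (a ⊠ b) p s ∘ (idm (a ⊠ b) ⊗ T) ∘ assoc_inv (a ⊠ b) c r.
Proof.
  rewrite !tensm_comp_r, !compA.
  assert (P := pentagon a b p s). rewrite !compA in P.
  rw_chain (eq_sym P).
  rw_chain (assoc_nat _ _ _). rewrite tensm_id.
  rw_chain (eq_sym (pentagon_inv a b c r)).
  rw_chain (comp_tensm _ _ _ _). rewrite assoc_inv_r, comp_id_l, tensm_id, comp_id_r.
  reflexivity.
Qed.

Lemma mid_nat {a b c d a' b' c' d' : C}
  (x : hom a a') (y : hom b b') (z : hom c c') (t : hom d d') :
  mid a' b' c' d' ∘ ((x ⊗ y) ⊗ (z ⊗ t)) = ((x ⊗ z) ⊗ (y ⊗ t)) ∘ mid a b c d.
Proof.
  unfold mid. rewrite !compA.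
  rw_chain (assoc_inv_nat _ _ _).
  rw_chain (absorb_tensm_r _ _ _). rewrite assoc_nat, split_tensm_r, !compA.
  rw_chain (absorb_tensm_r _ _ _).
  rewrite absorb_tensm_l, sym_nat, split_tensm_l, split_tensm_r, !compA.
  rw_chain (absorb_tensm_r (assoc_inv _ _ _) _ x).
  rewrite assoc_inv_nat, split_tensm_r, !compA.
  rw_chain (assoc_nat _ _ _). reflexivity.
Qed.

Lemma midE (a b c d : C) :
  mid a b c d = assoc a c (b ⊠ d)
     ∘ (idm a ⊗ (assoc_inv c b d ∘ (sym b c ⊗ idm d) ∘ assoc b c d))
     ∘ assoc_inv a b (c ⊠ d).
Proof. unfold mid. rewrite !tensm_comp_r, !compA. reflexivity. Qed.

Lemma mid_tens_l (a b c p q : C) :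
  (assoc a b p ⊗ idm (c ⊠ q)) ∘ assoc a (b ⊠ p) (c ⊠ q) ∘ (idm a ⊗ mid b c p q)
  ∘ assoc_inv a (b ⊠ c) (p ⊠ q) ∘ (assoc_inv a b c ⊗ idm (p ⊠ q)) = mid (a ⊠ b) c p q.
Proof. rewrite (midE b), (midE (a ⊠ b)). apply assoc_conj_whisker. Qed.

Lemma mid_unit_l (b c d : C) :
  (lunit c ⊗ idm (b ⊠ d)) ∘ mid unit b c d ∘ (lunit_inv b ⊗ idm (c ⊠ d))
  = assoc_inv c b d ∘ (sym b c ⊗ idm d) ∘ assoc b c d.
Proof.
  rewrite midE, !compA, <- kelly_l, lunit_nat, (kelly_l b), !compA.
  rw_chain (assoc_inv_r _ _ _). rw_chain (comp_id_r _). rw_chain (comp_tensm _ _ _ _).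
  rewrite lunit_inv_r, comp_id_l, tensm_id, comp_id_r. reflexivity.
Qed.

End Coherence.

Section HopfAlgebra.
Context {C : SymMonCat} (A : C) (mu : hom (A ⊠ A) A) (eta : hom unit A)
  (Delta : hom A (A ⊠ A)) (eps : hom A unit) (S : hom A A)
  (HH : IsHopfAlgebra A mu eta Delta eps S).

Lemma coassoc_inv : (idm A ⊗ Delta) ∘ Delta = assoc_inv A A A ∘ (Delta ⊗ idm A) ∘ Delta.
Proof.
  rewrite <- compA, <- (hopf_coassoc HH), !compA, assoc_inv_l, comp_id_l. reflexivity.
Qed.

Lemma counit_l_inv : (eps ⊗ idm A) ∘ Delta = lunit_inv A.
Proof.
  apply (split_mono_cancel _ _ (lunit A) (lunit_inv A)); [apply lunit_inv_l|].
  rewrite compA, (hopf_counit_l HH), lunit_inv_r. reflexivity.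
Qed.

Lemma mul_assoc_tens (Y : C) :
  (mu ⊗ idm Y) ∘ assoc A A Y ∘ (idm A ⊗ (mu ⊗ idm Y))
  = ((mu ∘ (mu ⊗ idm A)) ⊗ idm Y) ∘ (assoc A A A ⊗ idm Y) ∘ assoc A (A ⊠ A) Y.
Proof.
  rw_chain (assoc_nat _ _ _). rw_chain (comp_tensm _ _ _ _). rewrite !comp_id_l.
  rewrite <- (tensm_comp_l (mu ∘ (mu ⊗ idm A)) (assoc A A A)), (hopf_mul_assoc HH).
  reflexivity.
Qed.

Lemma antipode_twist :
  (mu ⊗ idm A) ∘ assoc A A A ∘ (S ⊗ ((mu ⊗ mu) ∘ mid A A A A ∘ (Delta ⊗ idm (A ⊠ A))))
  ∘ assoc_inv A A (A ⊠ A) ∘ (Delta ⊗ idm (A ⊠ A))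
  = (idm A ⊗ mu) ∘ assoc_inv A A A ∘ (sym A A ⊗ idm A) ∘ assoc A A A.
Proof.
  rewrite (tensm_factor_l S), (tensm_factor_l mu mu), !tensm_comp_r, !compA.
  repeat rw_chain (tensm_interchange S _).
  rw_chain (mul_assoc_tens A).
  rw_chain (assoc_nat (idm A) (idm (A ⊠ A)) mu).
  rw_chain (comp_tensm (assoc A A A) _ (idm A) mu). rewrite tensm_id, comp_id_r, comp_id_l.
  rewrite (tensm_factor_r (assoc A A A) mu), !compA.
  rw_chain (comp_tensm (mu ∘ (mu ⊗ idm A)) (idm _) (idm A) mu).
  rewrite comp_id_r, comp_id_l, <- (tensm_id A (A ⊠ A)).
  rw_chain (eq_sym (assoc_inv_nat S (idm A) (idm (A ⊠ A)))).
  rw_chain (comp_tensm (S ⊗ idm A) Delta (idm (A ⊠ A)) (idm (A ⊠ A))). rewrite comp_id_l.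
  rw_chain (eq_sym (assoc_inv_nat (idm A) Delta (idm (A ⊠ A)))).
  rw_chain (comp_tensm (idm A ⊗ Delta) _ (idm (A ⊠ A)) (idm (A ⊠ A))).
  rewrite comp_id_l, <- tensm_interchange.
  rw_chain coassoc_inv.
  rewrite <- (tensm_id A A), (eq_sym (assoc_inv_nat S (idm A) (idm A))), tensm_id.
  rewrite !tensm_comp_l, !compA. rw_chain (mid_tens_l A A A A A).
  rw_chain (comp_tensm ((S ⊗ idm A) ⊗ idm A) (Delta ⊗ idm A) (idm (A ⊠ A)) (idm (A ⊠ A))).
  rewrite comp_id_l, comp_tensm, comp_id_l, <- (tensm_id A A).
  rw_chain (mid_nat (S ⊗ idm A ∘ Delta) (idm A) (idm A) (idm A)).
  rw_chain (comp_tensm (mu ∘ (mu ⊗ idm A)) _ mu _). rewrite tensm_id, comp_id_r.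
  rw_chain (comp_tensm mu _ (idm A) (idm A)). rewrite comp_id_l, (hopf_antipode_l HH).
  rewrite tensm_comp_l, compA, (hopf_unit_l HH), tensm_factor_r, tensm_comp_l, !compA.
  rewrite <- (tensm_id A A).
  rw_chain (eq_sym (mid_nat eps (idm A) (idm A) (idm A))).
  rw_chain (comp_tensm (eps ⊗ idm A) Delta (idm A ⊗ idm A) (idm A ⊗ idm A)).
  rewrite counit_l_inv, !tensm_id, comp_id_l.
  rw_chain (mid_unit_l A A A). reflexivity.
Qed.

Definition lact {X Y : C} (f : hom X (A ⊠ Y)) : hom (A ⊠ X) (A ⊠ Y) :=
  (mu ⊗ idm Y) ∘ assoc A A Y ∘ (idm A ⊗ f).

Lemma lact_comp {X Y Z : C} (t : hom Y (A ⊠ Z)) (s : hom X (A ⊠ Y)) :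
  lact t ∘ lact s = lact (lact t ∘ s).
Proof.
  unfold lact. rewrite !tensm_comp_r, !compA.
  rw_chain (eq_sym (tensm_interchange mu t)).
  rewrite <- (tensm_id A Z). rw_chain (assoc_nat mu (idm A) (idm Z)).
  rw_chain (comp_tensm mu (mu ⊗ idm A) (idm Z) (idm Z)). rewrite comp_id_l.
  rewrite <- (tensm_id A A) at 1. rw_chain (eq_sym (assoc_nat (idm A) (idm A) t)).
  assert (P := pentagon A A A Z). rewrite !compA in P. rw_chain P.
  rw_chain (comp_tensm (mu ∘ (mu ⊗ idm A)) (assoc A A A) (idm Z) (idm Z)).
  rewrite comp_id_l, (hopf_mul_assoc HH), tensm_comp_l, ?compA.
  rw_chain (eq_sym (assoc_nat (idm A) mu (idm Z))). reflexivity.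
Qed.

Lemma lact_eta (X : C) : lact ((eta ⊗ idm X) ∘ lunit_inv X) = idm (A ⊠ X).
Proof.
  unfold lact. rewrite tensm_comp_r, !compA. rw_chain (assoc_nat (idm A) eta (idm X)).
  rw_chain (comp_tensm mu (idm A ⊗ eta) (idm X) (idm X)).
  rewrite comp_id_l, (hopf_unit_r HH).
  rewrite triangle, comp_tensm, lunit_inv_r, !comp_id_l, tensm_id. reflexivity.
Qed.

Context (I : C) (Lam : hom I A) (HL : left_integral mu eps Lam).

Lemma bialg_left_integral :
  (mu ⊗ mu) ∘ mid A A A A ∘ (Delta ⊗ (Delta ∘ Lam))
  = lunit (A ⊠ A) ∘ (eps ⊗ (Delta ∘ Lam)).
Proof.
  replace (Delta ⊗ (Delta ∘ Lam)) with ((Delta ⊗ Delta) ∘ (idm A ⊗ Lam))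
    by (rewrite comp_tensm, comp_id_r; reflexivity).
  rewrite !compA, <- (hopf_bialg HH), <- compA, HL, compA, <- lunit_nat, <- compA,
    comp_tensm, comp_id_l.
  reflexivity.
Qed.

Lemma left_integral_shift :
  (idm A ⊗ mu) ∘ assoc_inv A A A ∘ (sym A A ⊗ idm A) ∘ assoc A A A ∘ (idm A ⊗ (Delta ∘ Lam))
  = (mu ⊗ idm A) ∘ assoc A A A ∘ (S ⊗ (Delta ∘ Lam)).
Proof.
  rewrite <- antipode_twist, tensm_factor_l.
  rw_chain (tensm_interchange Delta (Delta ∘ Lam)). rewrite !tensm_id, !comp_id_r.
  rewrite <- (tensm_id A A) at 2.
  rw_chain (assoc_inv_nat (idm A) (idm A) (Delta ∘ Lam)).
  rw_chain (comp_tensm S (idm A) _ _). rewrite comp_id_r.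
  rw_chain (comp_tensm Delta (idm A) _ _). rewrite comp_id_r, comp_id_l.
  rw_chain bialg_left_integral.
  rewrite (tensm_factor_r eps), (compA (eps ⊗ idm I) _ (lunit (A ⊠ A))), lunit_nat,
    !split_tensm_r, !compA.
  rw_chain (eq_sym (assoc_inv_nat (idm A) eps (idm I))).
  rw_chain (triangle_inv A I). rw_chain (comp_tensm (runit A) _ (idm I) _).
  rewrite !comp_id_l. rw_chain (comp_tensm _ Delta _ _).
  rewrite comp_id_l, (hopf_counit_r HH), tensm_id, comp_id_r. reflexivity.
Qed.

Context (lam : hom A I) (HR : right_cointegral Delta eta lam).

Definition lamR : hom A (A ⊠ I) := (idm A ⊗ lam) ∘ Delta.

Lemma lamR_right_cointegral : right_cointegral Delta eta lamR.
Proof.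
  unfold right_cointegral, lamR.
  rewrite tensm_comp_l, <- compA, <- (hopf_coassoc HH), !compA.
  rw_chain (eq_sym (assoc_nat (idm A) lam (idm A))).
  rw_chain (comp_tensm (idm A) (idm A) (lam ⊗ idm A) Delta). rewrite comp_id_l, HR.
  rewrite split_tensm_r, !compA.
  rw_chain (assoc_nat (idm A) lam eta). rw_chain (runit_inv_tens A A).
  rewrite (tensm_factor_r (idm A ⊗ lam) eta), (tensm_factor_r (idm A ⊗ lam ∘ Delta) eta),
    ?compA.
  rw_chain (eq_sym (runit_inv_nat (idm A ⊗ lam))).
  rw_chain (eq_sym (runit_inv_nat (idm A ⊗ lam ∘ Delta))). reflexivity.
Qed.

Context (HU : forall (X : C) (f : hom A X), right_cointegral Delta eta f ->
                exists! g : hom I X, f = g ∘ lam).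

Lemma lam_epi (X : C) (g g' : hom I X) : g ∘ lam = g' ∘ lam -> g = g'.
Proof.
  intros E.
  assert (Hc : right_cointegral Delta eta (g ∘ lam)).
  { unfold right_cointegral.
    rewrite tensm_comp_l, <- compA, HR, compA, comp_tensm, comp_id_l. reflexivity. }
  destruct (HU X (g ∘ lam) Hc) as [g0 [_ Huniq]].
  rewrite <- (Huniq g eq_refl), <- (Huniq g' E). reflexivity.
Qed.

Context (Hll : lam ∘ Lam = idm I).

Definition gamma : hom I (A ⊠ I) := lamR ∘ Lam.

Lemma lamR_gamma : lamR = gamma ∘ lam.
Proof.
  destruct (HU _ lamR lamR_right_cointegral) as [g [Hg _]].
  unfold gamma. rewrite Hg at 2. rewrite <- (compA Lam lam g), Hll, comp_id_r. exact Hg.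
Qed.

Lemma lact_gamma_antipode :
  lact gamma ∘ (S ⊗ idm I) ∘ gamma = (eta ⊗ idm I) ∘ lunit_inv I.
Proof.
  apply lam_epi.
  transitivity ((mu ⊗ idm I) ∘ assoc A A I ∘ (S ⊗ lamR) ∘ Delta).
  { unfold lact. rewrite <- !compA. f_equal. rewrite !compA, lamR_gamma.
    rewrite (tensm_factor_r S (gamma ∘ lam)), tensm_comp_r, !compA.
    rw_chain (eq_sym (tensm_interchange S lam)).
    rw_chain (lamR_gamma : (idm A ⊗ lam) ∘ Delta = gamma ∘ lam). reflexivity. }
  unfold lamR. rewrite split_tensm_r, !compA. rw_chain coassoc_inv.
  rw_chain (assoc_nat S (idm A) lam). rw_chain (assoc_inv_r A A A). rw_chain (comp_id_r _).
  rw_chain (comp_tensm mu (S ⊗ idm A) (idm I) lam). rw_chain (comp_tensm _ Delta _ (idm A)).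
  rewrite !comp_id_l, comp_id_r, (hopf_antipode_l HH).
  replace ((eta ∘ eps) ⊗ lam) with ((eta ⊗ idm I) ∘ (eps ⊗ lam))
    by (rewrite comp_tensm, comp_id_l; reflexivity).
  rewrite (tensm_factor_r eps lam), !compA. rw_chain counit_l_inv.
  rw_chain (eq_sym (lunit_inv_nat lam)). reflexivity.
Qed.

Lemma lact_gammaE :
  lact gamma
  = (idm A ⊗ lam) ∘ (mu ⊗ idm A) ∘ assoc A A A ∘ (idm A ⊗ (Delta ∘ Lam)).
Proof.
  unfold lact, gamma, lamR. rewrite !tensm_comp_r, !compA.
  rw_chain (assoc_nat (idm A) (idm A) lam). rewrite tensm_id.
  rw_chain (tensm_interchange mu lam). reflexivity.
Qed.

Definition pairing : hom (A ⊠ A) I := lam ∘ mu ∘ (S ⊗ idm A).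

Context (HS2 : S ∘ S = idm A).

Lemma pairing_integral_sym :
  (idm A ⊗ pairing) ∘ (idm A ⊗ sym A A) ∘ assoc_inv A A A ∘ ((Delta ∘ Lam) ⊗ idm A)
  = lact gamma ∘ sym I A.
Proof.
  unfold pairing. rewrite lact_gammaE.
  assert (E : (mu ⊗ idm A) ∘ assoc A A A ∘ (idm A ⊗ (Delta ∘ Lam))
           = (mu ⊗ idm A) ∘ assoc A A A ∘ (S ⊗ (Delta ∘ Lam)) ∘ (S ⊗ idm I)).
  { rw_chain (comp_tensm S S (Delta ∘ Lam) (idm I)). rewrite HS2, comp_id_r. reflexivity. }
  rw_chain E. rw_chain (eq_sym left_integral_shift).
  rw_chain (eq_sym (tensm_interchange S (Delta ∘ Lam))). rewrite <- (tensm_id A A).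
  rw_chain (assoc_nat S (idm A) (idm A)).
  rw_chain (comp_tensm (sym A A) (S ⊗ idm A) (idm A) (idm A)).
  rewrite sym_nat, comp_id_l, (tensm_comp_l (idm A ⊗ S) (sym A A)), ?compA.
  rw_chain (assoc_inv_nat (idm A) S (idm A)).
  rw_chain (eq_sym (sym_nat (Delta ∘ Lam) (idm A))).
  rw_chain (hexagon_inv A A A).
  rewrite !tensm_comp_r, ?compA. reflexivity.
Qed.

Lemma pairing_assoc :
  (idm (A ⊠ A) ⊗ pairing) ∘ (idm (A ⊠ A) ⊗ sym A A) ∘ assoc_inv (A ⊠ A) A A
    ∘ (assoc A A A ⊗ idm A) ∘ ((idm A ⊗ (Delta ∘ Lam)) ⊗ idm A)
  = assoc A A I ∘ (idm A ⊗ ((idm A ⊗ pairing) ∘ (idm A ⊗ sym A A) ∘ assoc_inv A A A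
      ∘ ((Delta ∘ Lam) ⊗ idm A))) ∘ assoc_inv A I A.
Proof.
  rw_chain (pentagon_inv A A A A).
  rw_chain (assoc_inv_nat (idm A) (Delta ∘ Lam) (idm A)).
  rewrite <- (tensm_id A A). rw_chain (eq_sym (assoc_nat (idm A) (idm A) (sym A A))).
  rw_chain (eq_sym (assoc_nat (idm A) (idm A) pairing)).
  rewrite !tensm_comp_r, ?compA. reflexivity.
Qed.

Definition pair_out (f : hom (A ⊠ I) (I ⊠ A)) : hom ((A ⊠ I) ⊠ A) (I ⊠ I) :=
  (idm I ⊗ pairing) ∘ (idm I ⊗ sym A A) ∘ assoc_inv I A A ∘ (f ⊗ idm A).

Definition Psi_prep : hom ((A ⊠ A) ⊠ I) ((A ⊠ I) ⊠ A) :=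
  assoc A I A ∘ (idm A ⊗ sym A I) ∘ (idm A ⊗ lact ((S ⊗ idm I) ∘ gamma))
  ∘ assoc_inv A A I.

Lemma Psi_left_inverse (e : hom (A ⊠ A) I) :
  pair_out (Psi Delta Lam e) ∘ Psi_prep = e ⊗ idm I.
Proof.
  unfold pair_out, Psi. rewrite !tensm_comp_l, ?compA.
  rw_chain (assoc_inv_nat e (idm A) (idm A)). rewrite tensm_id.
  rw_chain (eq_sym (tensm_interchange e (sym A A))).
  rw_chain (eq_sym (tensm_interchange e pairing)).
  rw_chain pairing_assoc. rewrite pairing_integral_sym. unfold Psi_prep. rewrite ?compA.
  rw_chain (assoc_inv_l A I A). rw_chain (comp_id_r _).
  rw_chain (comp_tensm (idm A) (idm A) (lact gamma ∘ sym I A) (sym A I)).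
  rw_chain (sym_invol _ _). rewrite !comp_id_r.
  rw_chain (comp_tensm (idm A) (idm A) (lact gamma) _).
  rewrite lact_comp, ?compA, lact_gamma_antipode, lact_eta.
  rewrite !comp_id_l, tensm_id, comp_id_r. rw_chain (assoc_inv_r A A I).
  rewrite comp_id_r. reflexivity.
Qed.

End HopfAlgebra.

Theorem mainTheorem6 (C : SymMonCat) (A : C) (mu : hom (A ⊠ A) A)
    (eta : hom unit A) (Delta : hom A (A ⊠ A)) (eps : hom A unit)
    (S : hom A A) (I : C) (Lam : hom I A) (lam : hom A I) :
  IsHopfAlgebra A mu eta Delta eps S ->
  (exists S' : hom A A, S' ∘ S = idm A /\ S ∘ S' = idm A) ->
  S ∘ S = idm A ->
  invertible_ob I ->
  universal_left_integral mu eps Lam ->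
  universal_right_cointegral Delta eta lam ->
  lam ∘ Lam = idm I ->
  forall e1 e2 : hom (A ⊠ A) I, Psi Delta Lam e1 = Psi Delta Lam e2 -> e1 = e2.
Proof.
  intros HH _ HS2 HI [HL _] [HR HU] Hll e1 e2 HP.
  apply (tensm_invertible_inj I e1 e2 HI).
  rewrite <- (Psi_left_inverse A mu eta Delta eps S HH I Lam HL lam HR HU Hll HS2 e1),
    <- (Psi_left_inverse A mu eta Delta eps S HH I Lam HL lam HR HU Hll HS2 e2), HP.
  reflexivity.
Qed.
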